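(* Let $X=(X_1,\dots,X_n)$ be a random vector in $\mathcal{X}^n$ whose distribution is exchangeable, let $T:\mathcal{X}^n\to\mathbb{R}$ be a fixed (measurable) function, and let $q$ be any probability distribution on $\mathcal{S}_n$. Let $M\ge1$ and draw $\sigma_0,\sigma_1,\dots,\sigma_M$ i.i.d. from $q$, independently of $X$. Define $$\bar P=\frac{\sum_{m=0}^M\sum_{m'=0}^M\mathbf{1}\{T(X_{\sigma_m\circ\sigma_{m'}^{-1}})\ge T(X)\}}{(1+M)^2}.$$ Then $\mathbb{P}\{\bar P\le\alpha\}\le2\alpha$ for all $\alpha\in[0,1]$.
   Context: $\mathcal{S}_n$ denotes the set (group) of all permutations of $[n]=\{1,\dots,n\}$. For $x\in\mathcal{X}^n$ and $\sigma\in\mathcal{S}_n$, $x_\sigma:=(x_{\sigma(1)},\dots,x_{\sigma(n)})$. $X$ is exchangeable means $X\stackrel{d}{=}X_\pi$ for every fixed $\pi\in\mathcal{S}_n$. *)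

From HB Require Import structures.
From mathcomp Require Import all_boot all_order all_algebra all_fingroup.
From mathcomp Require Import all_classical all_reals all_analysis.
Set Implicit Arguments. Unset Strict Implicit. Unset Printing Implicit Defensive.
Import Order.TTheory GRing.Theory Num.Theory.
Local Open Scope classical_set_scope.
Local Open Scope ring_scope.

Definition permute (X : Type) (n : nat) (x : n.-tuple X) (s : 'S_n) : n.-tuple X :=
  [tuple tnth x (s i) | i < n].

(* Composition sigma o tau (first tau, then sigma) as a permutation.
   Note: in mathcomp, (t * s) x = s (t x), hence sigma o tau = tau * sigma. *)
Definition pcomp (n : nat) (s t : 'S_n) : 'S_n := (t * s)%g.

(* Mutual independence of the random elements X, sig_0, ..., sig_M
   (product rule; taking B m = setT gives every subfamily). *)
Definition mutually_independent (d : measure_display) (Omega : measurableType d)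
  (R : realType) (P : probability Omega R)
  (dX : measure_display) (Y : measurableType dX) (M n : nat)
  (X : Omega -> Y) (sig : 'I_M.+1 -> Omega -> 'S_n) : Prop :=
  forall (A : set Y) (B : 'I_M.+1 -> set 'S_n), measurable A ->
    P (X @^-1` A `&` \bigcap_(m in [set: 'I_M.+1]) (sig m @^-1` B m)) =
    (P (X @^-1` A) * \prod_(m < M.+1) P (sig m @^-1` B m))%E.

Definition Pbar (R : realType) (Xs : Type) (n M : nat)
  (T : n.-tuple Xs -> R) (x : n.-tuple Xs) (s : 'I_M.+1 -> 'S_n) : R :=
  (\sum_(m < M.+1) \sum_(m' < M.+1)
     (T x <= T (permute x (pcomp (s m) (s m')^-1%g)))%R%:R)
  / (M.+1%:R ^+ 2).

From Pilot Require Import Defs.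
From HB Require Import structures.
From mathcomp Require Import all_boot all_order all_algebra all_fingroup.
From mathcomp Require Import all_classical all_reals all_analysis.
From mathcomp Require Import ring lra measurable_realfun.
Set Implicit Arguments. Unset Strict Implicit. Unset Printing Implicit Defensive.
Import Order.TTheory GRing.Theory Num.Theory.
Local Open Scope classical_set_scope.
Local Open Scope ring_scope.

(* Write N = M + 1 and, for a fixed family s = (s_0, ..., s_M) of permutations,
   K_m(x) = #{m' | T x <= T (x_{s_m o s_m'^-1})}, so that
   P-bar = (sum_m K_m) / N^2 and K_m >= 1.  The proof has three layers.

   1. Fixed permutations.  By exchangeability, K_m(X) has the law of K_m
      evaluated at X_{s_m^-1}, which is the number of m' with
      T(X_{s_m^-1}) <= T(X_{s_m'^-1}); at most j indices m have at most j
      such m' (count_few_above), so sum_m P(K_m(X) <= j) <= j.  A layer-cake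
      decomposition of (a - K_m)_+ with a = 2 alpha N (weights clamp01 of a
      staircase, Clamp section) turns P-bar <= alpha into
      alpha N^2 <= sum_m sum_j clamp01 (a - j - 1) [K_m <= j + 1]; taking
      expectations gives alpha N^2 P(P-bar <= alpha) <= a^2 / 2 = 2 alpha^2 N^2.
   2. Randomization.  Conditioning on the finitely many values of the
      independent permutations sig_0, ..., sig_M (with law q each), any bound
      valid for every fixed family s remains valid for the random family.
   3. The theorem combines 1 and 2. *)

(* The truncation of t to [0, 1]; clamp01 (a - j) is the length of
   [j, j + 1] inside [0, a], the layer-cake weights of the argument. *)
Definition clamp01 {R : realFieldType} (t : R) : R :=
  if t <= 0 then 0 else if t <= 1 then t else 1.

Section Clamp.
Variable R : realFieldType.
Implicit Types t a b : R.

Lemma clamp01_ge0 t : 0 <= clamp01 t.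
Proof. by rewrite /clamp01; case: ifP => // t_gt0; case: ifP => // _; lra. Qed.

Lemma clamp01_eq0 t : t <= 0 -> clamp01 t = 0.
Proof. by rewrite /clamp01 => ->. Qed.

Lemma clamp01_eq1 t : 1 <= t -> clamp01 t = 1.
Proof.
move=> t_ge1; rewrite /clamp01 ifN; last by rewrite -ltNge; lra.
by case: ifP => // t_le1; lra.
Qed.

Lemma clamp01_ge t : t <= 1 -> t <= clamp01 t.
Proof. by rewrite /clamp01 => t_le1; case: ifP => //; rewrite t_le1. Qed.

Lemma clamp01_le t : 0 <= t -> clamp01 t <= t.
Proof. by rewrite /clamp01 => t_ge0; case: ifP => // _; case: ifP => // /negbT; lra. Qed.

Lemma subr_natS t (j : nat) : t - j.+1%:R = (t - 1) - j%:R.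
Proof. by rewrite -natr1; lra. Qed.

Lemma sum_clamp01_le N b : 0 <= b -> \sum_(0 <= j < N) clamp01 (b - j%:R) <= b.
Proof.
elim: N b => [|N IHN] b b_ge0; first by rewrite big_nil.
rewrite big_nat_recl // subr0.
under eq_bigr do rewrite subr_natS.
have [b_le1|b_gt1] := lerP b 1.
  rewrite big1_seq => [|j _]; last by apply: clamp01_eq0; have := ler0n R j; lra.
  by rewrite addr0 clamp01_le.
by rewrite clamp01_eq1 ?(ltW b_gt1) // addrC -lerBrDr; apply: IHN; lra.
Qed.

(* The expected weight: sum_j clamp01 (a - j - 1) (j + 1) <= int_0^a t dt. *)
Lemma layer_weight_le N a : 0 <= a ->
  \sum_(0 <= j < N) clamp01 (a - j.+1%:R) * j.+1%:R <= a ^+ 2 / 2.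
Proof.
elim: N a => [|N IHN] a a_ge0;
  have sq_ge0 : 0 <= a ^+ 2 / 2 by rewrite divr_ge0 ?sqr_ge0.
  by rewrite big_nil.
have [a_le1|a_gt1] := lerP a 1.
  rewrite big1_seq => [//|j _].
  rewrite clamp01_eq0 ?mul0r //; have : (1 : R) <= j.+1%:R by rewrite ler1n.
  lra.
have shift : \sum_(0 <= i < N) clamp01 (a - i.+2%:R) * i.+2%:R =
    \sum_(0 <= i < N) clamp01 ((a - 1) - i.+1%:R) * i.+1%:R +
    \sum_(0 <= i < N) clamp01 ((a - 1) - i.+1%:R).
  rewrite -big_split; apply: eq_bigr => i _.
  by rewrite subr_natS -[i.+2%:R]natr1 mulrDr mulr1.
rewrite big_nat_recl // shift mulr1.
have IH := IHN (a - 1) ltac:(lra).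
have steps := @sum_clamp01_le N.+1 (a - 1) ltac:(lra).
rewrite big_nat_recl // subr0 in steps.
rewrite !expr2 in IH *; nra.
Qed.

Lemma layer_lower_bound N a (K : nat) : a <= N.+1%:R ->
  a - K.+1%:R <= \sum_(0 <= j < N) clamp01 (a - j.+1%:R) * (K <= j)%N%:R.
Proof.
elim: N a K => [|N IHN] a K a_le.
  rewrite big_nil; have : (1 : R) <= K.+1%:R by rewrite ler1n.
  lra.
have shift : \sum_(0 <= i < N) clamp01 (a - i.+2%:R) * (K <= i.+1)%N%:R =
    \sum_(0 <= i < N) clamp01 ((a - 1) - i.+1%:R) * (K.-1 <= i)%N%:R.
  by apply: eq_bigr => i _; rewrite subr_natS; case: K.
rewrite big_nat_recl // {}shift.
rewrite -natr1 in a_le; have := IHN (a - 1) K.-1 ltac:(lra).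
case: K => [|K] /= IH; last by rewrite mulr0 add0r -[K.+2%:R]natr1; lra.
rewrite mulr1; have [a_ge2|a_lt2] := lerP 1 (a - 1).
  by rewrite clamp01_eq1 //; lra.
have := clamp01_ge (ltW a_lt2).
have : 0 <= \sum_(0 <= i < N) clamp01 (a - 1 - i.+1%:R) * 1.
  by apply: sumr_ge0 => i _; rewrite mulr1 clamp01_ge0.
lra.
Qed.

End Clamp.

Lemma le_sum_prob d (T : measurableType d) (R : realType) (P : probability T R)
  (I J : finType) (a : I -> R) (b : J -> R) (A : I -> set T) (B : J -> set T) :
  (forall i, measurable (A i)) -> (forall j, measurable (B j)) ->
  (forall i, 0 <= a i) -> (forall j, 0 <= b j) ->
  (forall x, \sum_i a i * \1_(A i) x <= \sum_j b j * \1_(B j) x) ->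
  \sum_i a i * fine (P (A i)) <= \sum_j b j * fine (P (B j)).
Proof.
move=> mA mB a_ge0 b_ge0 le_ab.
have simple_integral (K : finType) (c : K -> R) (C : K -> set T) :
    (forall k, measurable (C k)) -> (forall k, 0 <= c k) ->
    ((\sum_k c k * fine (P (C k)))%:E =
      \int[P]_x (\sum_k c k * \1_(C k) x)%:E)%E.
  move=> mC c_ge0; rewrite -sumEFin.
  under eq_integral do rewrite -sumEFin.
  rewrite ge0_integral_sum //; last 2 first.
  - by move=> k; apply/measurable_EFinP; apply: measurable_funM => //; exact: measurable_indic.
  - by move=> k x _; rewrite lee_fin mulr_ge0.
  apply: eq_bigr => k _; rewrite EFinM fineK ?fin_num_measure //.
  under eq_integral do rewrite EFinM.
  rewrite ge0_integralZl_EFin ?integral_indic ?setIT //.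
  by apply/measurable_EFinP; exact: measurable_indic.
have measurable_comb (K : finType) (c : K -> R) (C : K -> set T) :
    (forall k, measurable (C k)) ->
    measurable_fun setT (fun x => (\sum_k c k * \1_(C k) x)%:E).
  move=> mC; apply/measurable_EFinP; apply: measurable_sum => k.
  by apply: measurable_funM => //; exact: measurable_indic.
rewrite -lee_fin !simple_integral //.
apply: ge0_le_integral => //; try by [move=> x _; rewrite lee_fin | exact: measurable_comb].
by move=> x _; rewrite lee_fin sumr_ge0 // => i _; rewrite mulr_ge0.
Qed.

Lemma indic_boolE (T : Type) (R : realType) (b : T -> bool) x :
  \1_[set y | b y] x = (b x)%:R :> R.
Proof.
rewrite indicE; have [bx|/negP nbx] := boolP (b x); first by rewrite mem_set.
by rewrite memNset.
Qed.

Lemma measurable_sublevel d (T : measurableType d) (R : realType) (f : T -> R) c :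
  measurable_fun setT f -> measurable [set x | f x <= c].
Proof.
move=> mf; have := measurable_fun_ler mf (measurable_cst c) measurableT (Y := [set true]) I.
by rewrite setTI.
Qed.

(* Among N values, at most k have at most k values (with multiplicity) above
   them: all such indices lie above the smallest of them, which counts them. *)
Lemma count_few_above (R : realDomainType) N (v : 'I_N -> R) (k : nat) :
  (\sum_(m < N) ((\sum_(m' < N) (v m <= v m')%R) <= k)%N <= k)%N.
Proof.
set few := fun m : 'I_N => ((\sum_(m' < N) (v m <= v m')%R) <= k)%N.
case: (pickP few) => [m0 few_m0|no_few]; last first.
  by rewrite big1 // => m _; have := no_few m; rewrite /few => ->.
case: (Order.TotalTheory.arg_minP v few_m0) => ms few_ms min_ms.
apply: leq_trans few_ms; apply: leq_sum => m _.
rewrite -/(few m); have [few_m|//] := boolP (few m).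
by rewrite min_ms.
Qed.

Lemma permuteM (X : Type) n (x : n.-tuple X) (p t : 'S_n) :
  permute (permute x p) t = permute x (t * p)%g.
Proof. by apply: eq_from_tnth => i; rewrite /permute !tnth_mktuple permM. Qed.

Lemma permute1 (X : Type) n (x : n.-tuple X) : permute x 1%g = x.
Proof. by apply: eq_from_tnth => i; rewrite /permute !tnth_mktuple perm1. Qed.

Lemma measurable_permute d (Xs : measurableType d) n (p : 'S_n) :
  measurable_fun setT (fun x : n.-tuple Xs => permute x p).
Proof.
apply/measurable_fun_tnthP => i.
rewrite (_ : _ \o _ = (@tnth n Xs ^~ (p i))); first exact: measurable_tnth.
by apply/funext => x /=; rewrite tnth_mktuple.
Qed.

Definition exceed_count (R : realType) (Xs : Type) (n N : nat)
  (T : n.-tuple Xs -> R) (x : n.-tuple Xs) (s : 'I_N -> 'S_n) (m : 'I_N) : nat :=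
  \sum_(m' < N) (T x <= T (permute x (Defs.pcomp (s m) (s m')^-1%g)))%R.
Arguments exceed_count {R Xs n N}.

Section ExceedanceCounts.
Variables (R : realType) (Xs : Type) (n M : nat) (T : n.-tuple Xs -> R).
Implicit Types (x : n.-tuple Xs) (s : 'I_M.+1 -> 'S_n) (m : 'I_M.+1).

Lemma Pbar_exceed x s :
  Pbar T x s = (\sum_m exceed_count T x s m)%:R / M.+1%:R ^+ 2.
Proof.
rewrite /Pbar natr_sum; congr (_ / _); apply: eq_bigr => m _.
by rewrite /exceed_count natr_sum.
Qed.

(* The term m' = m compares T x with itself. *)
Lemma exceed_count_ge1 x s m : (1 <= exceed_count T x s m)%N.
Proof.
by rewrite /exceed_count (bigD1 m) //= /Defs.pcomp mulVg permute1 lexx add1n.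
Qed.

Lemma Pbar_gt0 x s : 0 < Pbar T x s.
Proof.
rewrite Pbar_exceed divr_gt0 ?exprn_gt0 ?ltr0n // (bigD1 ord0) //=.
exact: leq_trans (exceed_count_ge1 x s ord0) (leq_addr _ _).
Qed.

Lemma exceed_count_permute x s m :
  exceed_count T (permute x (s m)^-1%g) s m =
  (\sum_(m' < M.+1)
     (T (permute x (s m)^-1%g) <= T (permute x (s m')^-1%g))%R)%N.
Proof.
by apply: eq_bigr => m' _; rewrite permuteM /Defs.pcomp -mulgA mulgV mulg1.
Qed.

(* Layer-cake lower bound on the event {P-bar <= alpha}, with a = 2 alpha N
   and N = M + 1: summing a - K_m <= sum_j clamp01 (a - j - 1) [K_m <= j + 1]
   over m gives N a - sum_m K_m >= 2 alpha N^2 - alpha N^2. *)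
Lemma Pbar_layer_bound x s (alpha : R) :
  0 <= alpha -> 2 * alpha <= 1 -> Pbar T x s <= alpha ->
  alpha * M.+1%:R ^+ 2 <=
  \sum_m \sum_(j < M.+1) clamp01 (2 * alpha * M.+1%:R - j.+1%:R) *
                           (exceed_count T x s m <= j.+1)%N%:R.
Proof.
move=> alpha_ge0 alpha_le Pbar_le.
set N : R := M.+1%:R; set a := 2 * alpha * N.
have N_gt0 : 0 < N by rewrite ltr0n.
have a_le : a <= M.+2%:R by rewrite -natr1 -/N /a; nra.
have per_m m : a - (exceed_count T x s m)%:R <=
    \sum_(j < M.+1) clamp01 (a - j.+1%:R) * (exceed_count T x s m <= j.+1)%N%:R.
  have := exceed_count_ge1 x s m; case: (exceed_count T x s m) => [//|K] _.
  under eq_bigr do rewrite ltnS.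
  by have := @layer_lower_bound R M.+1 a K a_le; rewrite big_mkord.
apply: le_trans (ler_sum _ (fun m _ => per_m m)).
rewrite Pbar_exceed ler_pdivrMr ?exprn_gt0 // -/N in Pbar_le.
rewrite sumrB sumr_const card_ord -mulr_natr -/N -natr_sum /a; nra.
Qed.

End ExceedanceCounts.

Lemma measurable_exceed_count (R : realType) d (Xs : measurableType d) (n N : nat)
  (T : n.-tuple Xs -> R) (s : 'I_N -> 'S_n) m :
  measurable_fun setT T -> measurable_fun setT (fun x => (exceed_count T x s m)%:R : R).
Proof.
move=> mT; rewrite /exceed_count; under eq_fun do rewrite natr_sum.
apply: measurable_sum => m'.
apply: (measurableT_comp (f := fun b : bool => (b%:R : R))) => //.
apply: measurable_fun_ler => //.
by apply: measurableT_comp => //; exact: measurable_permute.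
Qed.

Section FixedPermutations.
Variables (R : realType) (d : measure_display) (Omega : measurableType d).
Variables (P : probability Omega R) (dX : measure_display) (Xs : measurableType dX).
Variables (n : nat) (X : Omega -> n.-tuple Xs) (T : n.-tuple Xs -> R).
Hypothesis mX : measurable_fun setT X.
Hypothesis exch : forall (pi : 'S_n) (A : set (n.-tuple Xs)), measurable A ->
  P (X @^-1` A) = P ((fun w => permute (X w) pi) @^-1` A).
Hypothesis mT : measurable_fun setT T.
Variables (M : nat) (s : 'I_M.+1 -> 'S_n).

Let measurable_preimage A : measurable A -> measurable (X @^-1` A).
Proof. by move=> mA; rewrite -[X @^-1` A]setTI; exact: mX. Qed.

Let measurable_exceed_le m (j : nat) :
  measurable [set x | (exceed_count T x s m <= j)%N].
Proof.
rewrite (_ : [set x | _] = [set x | (exceed_count T x s m)%:R <= (j%:R : R)]).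
  by apply: measurable_sublevel; exact: measurable_exceed_count.
by apply/funext => x /=; rewrite ler_nat.
Qed.

Lemma measurable_Pbar_le (alpha : R) : measurable [set x | Pbar T x s <= alpha].
Proof.
apply: measurable_sublevel; under eq_fun do rewrite Pbar_exceed natr_sum.
apply: measurable_funM => //; apply: measurable_sum => m.
exact: measurable_exceed_count.
Qed.

(* By exchangeability the m-th count has the law of the rank count of the
   m-th value among T(X_{s_m'^-1}), m' <= M; at most j of those ranks are
   <= j (count_few_above), whence the sum over m of the probabilities. *)
Lemma sum_prob_exceed_le (j : nat) :
  \sum_(m < M.+1) fine (P (X @^-1` [set x | (exceed_count T x s m <= j)%N]))
  <= j%:R.
Proof.
pose D m := [set w | (exceed_count T (permute (X w) (s m)^-1%g) s m <= j)%N].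
have mD m : measurable (D m).
  rewrite (_ : D m = X @^-1` ((fun x => permute x (s m)^-1%g) @^-1`
                               [set x | (exceed_count T x s m <= j)%N])) //.
  apply: measurable_preimage; rewrite -[X in measurable X]setTI.
  exact: measurable_permute.
have few_ranks w : \sum_(m < M.+1) (1 : R) * \1_(D m) w <=
                   \sum_(i < 1) j%:R * \1_[set: Omega] w.
  rewrite big_ord1 indicT mulr1.
  under eq_bigr do rewrite mul1r indic_boolE exceed_count_permute.
  rewrite -natr_sum ler_nat.
  exact: count_few_above.
have := le_sum_prob P (a := fun=> 1) (b := fun=> j%:R) mD (fun=> measurableT)
  (fun=> ler01) (fun=> ler0n _ _) few_ranks.
rewrite big_ord1 probability_setT mulr1; apply: le_trans.
apply: ler_sum => m _; rewrite mul1r (exch (s m)^-1%g) //; exact: lexx.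
Qed.

(* For fixed permutations the bound holds by the layer-cake argument:
   alpha N^2 P(Pbar <= alpha) <= sum_j clamp01 (a - j - 1) (j + 1) <= a^2 / 2,
   with a = 2 alpha N. *)
Lemma prob_Pbar_le (alpha : R) : 0 <= alpha ->
  (P (X @^-1` [set x | Pbar T x s <= alpha]%R) <= (2 * alpha)%:E)%E.
Proof.
move=> alpha_ge0; set A := [set x | Pbar T x s <= alpha].
have mA : measurable (X @^-1` A).
  by apply: measurable_preimage; exact: measurable_Pbar_le.
have PA_fin : P (X @^-1` A) \is a fin_num by exact: fin_num_measure.
rewrite -(fineK PA_fin) lee_fin.
have [alpha_big|alpha_small] := lerP (2^-1) alpha.
  by have := probability_le1 P mA; rewrite -(fineK PA_fin) lee_fin; lra.
have [alpha0|alpha_neq0] := eqVneq alpha 0.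
  rewrite (_ : X @^-1` A = set0) ?measure0 ?alpha0 ?mulr0 //.
  apply/seteqP; split => w //=; rewrite /A /= alpha0.
  by have := Pbar_gt0 T (X w) s; lra.
have alpha_gt0 : 0 < alpha by rewrite lt_neqAle eq_sym alpha_neq0.
set N : R := M.+1%:R; set a := 2 * alpha * N.
have N_gt0 : 0 < N by rewrite ltr0n.
pose c (j : 'I_M.+1) := clamp01 (a - j.+1%:R).
pose K (p : 'I_M.+1 * 'I_M.+1) := X @^-1` [set x | (exceed_count T x s p.1 <= p.2.+1)%N].
have alphaN2_gt0 : 0 < alpha * N ^+ 2 by rewrite mulr_gt0 ?exprn_gt0.
have layer w : \sum_(i < 1) alpha * N ^+ 2 * \1_(X @^-1` A) w <=
               \sum_p c p.2 * \1_(K p) w.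
  rewrite big_ord1 -(pair_bigA _ (fun m j => c j * \1_(K (m, j)) w)) /=.
  under eq_bigr do under eq_bigr do rewrite indic_boolE.
  rewrite indicE; have [/set_mem Aw|_] := boolP (w \in X @^-1` A); last first.
    rewrite mulr0 sumr_ge0 // => m _; rewrite sumr_ge0 // => j _.
    by rewrite mulr_ge0 ?clamp01_ge0.
  by rewrite mulr1; apply: Pbar_layer_bound => //; lra.
have by_layers : alpha * N ^+ 2 * fine (P (X @^-1` A)) <=
                 \sum_p c p.2 * fine (P (K p)).
  have := le_sum_prob P (fun=> mA)
    (fun p : 'I_M.+1 * 'I_M.+1 => measurable_preimage (measurable_exceed_le p.1 p.2.+1))
    (fun=> ltW alphaN2_gt0) (fun p => clamp01_ge0 _) layer.
  by rewrite big_ord1.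
have regroup : \sum_p c p.2 * fine (P (K p)) =
               \sum_j c j * \sum_(m < M.+1) fine (P (K (m, j))).
  rewrite -(pair_bigA _ (fun m j => c j * fine (P (K (m, j))))) exchange_big /=.
  by apply: eq_bigr => j _; rewrite mulr_sumr.
have ranks : \sum_j c j * \sum_(m < M.+1) fine (P (K (m, j))) <=
             \sum_j c j * j.+1%:R.
  apply: ler_sum => j _; apply: ler_wpM2l; first exact: clamp01_ge0.
  by rewrite /K /=; exact: sum_prob_exceed_le.
have weights : \sum_(j < M.+1) c j * j.+1%:R <= alpha * N ^+ 2 * (2 * alpha).
  have a_ge0 : 0 <= a by rewrite /a; nra.
  have -> : alpha * N ^+ 2 * (2 * alpha) = a ^+ 2 / 2 by rewrite /a; field.
  by have := layer_weight_le M.+1 a_ge0; rewrite big_mkord.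
rewrite -(ler_pM2l alphaN2_gt0); apply: le_trans by_layers _.
by rewrite regroup; apply: le_trans ranks weights.
Qed.

End FixedPermutations.

Section Randomization.
Variables (R : realType) (d : measure_display) (Omega : measurableType d).
Variables (P : probability Omega R) (dY : measure_display) (Y : measurableType dY).
Variables (X : Omega -> Y) (M n : nat) (q : {ffun 'S_n -> R}).
Variable sig : 'I_M.+1 -> Omega -> 'S_n.
Hypothesis mX : measurable_fun setT X.
Hypothesis q_ge0 : forall s, 0 <= q s.
Hypothesis q_sum1 : \sum_(s : 'S_n) q s = 1.
Hypothesis msig : forall m (B : set 'S_n), measurable (sig m @^-1` B).
Hypothesis sig_law : forall m (s : 'S_n), P (sig m @^-1` [set s]) = (q s)%:E.
Hypothesis indep : mutually_independent P X sig.
Variable A : ('I_M.+1 -> 'S_n) -> set Y.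
Hypothesis mA : forall s, measurable (A s).

Let joint (s : {ffun 'I_M.+1 -> 'S_n}) : set Omega :=
  X @^-1` A s `&` \bigcap_(m in [set: 'I_M.+1]) (sig m @^-1` [set s m]).

Let weight (s : {ffun 'I_M.+1 -> 'S_n}) : R := \prod_(m < M.+1) q (s m).

Let measurable_preimage B : measurable B -> measurable (X @^-1` B).
Proof. by move=> mB; rewrite -[X @^-1` B]setTI; exact: mX. Qed.

Let measurable_joint (s : {ffun 'I_M.+1 -> 'S_n}) : measurable (joint s).
Proof.
apply: measurableI; first exact: measurable_preimage.
by apply: fin_bigcap_measurable => [|m _]; [exact: finite_finset | exact: msig].
Qed.

Let sum_weight : \sum_s weight s = 1.
Proof.
transitivity (\prod_(m < M.+1) \sum_(s : 'S_n) q s); first by rewrite bigA_distr_bigA.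
by rewrite big1 // => m _; rewrite q_sum1.
Qed.

Let prob_joint (s : {ffun 'I_M.+1 -> 'S_n}) :
  fine (P (joint s)) = fine (P (X @^-1` A s)) * weight s.
Proof.
rewrite /joint indep // (eq_bigr (fun m => (q (s m))%:E)) => [|m _].
  by rewrite prodEFin fineM ?fin_num_measure //; apply: measurable_preimage.
by rewrite sig_law.
Qed.

(* An event about X whose probability is at most c for every fixed value of
   the permutations still has probability at most c when the permutations are
   drawn independently of X: decompose along their (finitely many) values. *)
Lemma randomized_le (c : R) : (forall s, (P (X @^-1` A s) <= c%:E)%E) ->
  (P [set w | A (fun m => sig m w) (X w)] <= c%:E)%E.
Proof.
move=> leA; set E := [set w | _].
have E_joint : E = \bigcup_(s in [set: {ffun 'I_M.+1 -> 'S_n}]) joint s.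
  apply/seteqP; split => w.
    move=> Ew; exists [ffun m => sig m w] => //; split => [|m _ /=]; last by rewrite ffunE.
    by rewrite /preimage /= (_ : fun_of_fin _ = fun m => sig m w) // funeqE => m; rewrite ffunE.
  move=> [s _ [As sig_s]]; rewrite /E /= (_ : (fun m => sig m w) = s) //.
  by rewrite funeqE => m; exact: sig_s.
have mE : measurable E.
  by rewrite E_joint; apply: fin_bigcup_measurable => [|s _]; [exact: finite_finset | exact: measurable_joint].
have cover w : \sum_(i < 1) 1 * \1_E w <= \sum_s (1 : R) * \1_(joint s) w.
  rewrite big_ord1 mul1r indicE; have [Ew|_] := boolP (w \in E); last first.
    by apply: sumr_ge0 => s _; rewrite mul1r indicE.
  have [s _ joint_s] : (\bigcup_(s in setT) joint s) w by rewrite -E_joint; exact: set_mem.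
  rewrite (bigD1 s) //= mul1r indicE mem_set // lerDl.
  by apply: sumr_ge0 => s' _; rewrite mul1r indicE.
have := le_sum_prob P (fun=> mE) measurable_joint (fun=> ler01) (fun=> ler01) cover.
rewrite big_ord1 mul1r -(fineK (fin_num_measure _ _ mE)) lee_fin => /le_trans; apply.
under eq_bigr do rewrite mul1r prob_joint //.
rewrite -[c]mulr1 -sum_weight mulr_sumr; apply: ler_sum => s _.
apply: ler_wpM2r; first exact: prodr_ge0.
by rewrite -lee_fin fineK ?fin_num_measure //; apply: measurable_preimage.
Qed.

End Randomization.

Theorem theorem9
  (R : realType) (d : measure_display) (Omega : measurableType d)
  (P : probability Omega R)
  (dX : measure_display) (Xs : measurableType dX) (n : nat)
  (X : Omega -> n.-tuple Xs) (mX : measurable_fun setT X)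
  (exch : forall (pi : 'S_n) (A : set (n.-tuple Xs)), measurable A ->
     P (X @^-1` A) = P ((fun w => permute (X w) pi) @^-1` A))
  (T : n.-tuple Xs -> R) (mT : measurable_fun setT T)
  (q : {ffun 'S_n -> R}) (q_ge0 : forall s, 0 <= q s)
  (q_sum1 : \sum_(s : 'S_n) q s = 1)
  (M : nat) (M_ge1 : (1 <= M)%N)
  (sig : 'I_M.+1 -> Omega -> 'S_n)
  (msig : forall m (B : set 'S_n), measurable (sig m @^-1` B))
  (sig_law : forall m (s : 'S_n), P (sig m @^-1` [set s]) = (q s)%:E)
  (indep : mutually_independent P X sig) :
  forall alpha : R, 0 <= alpha <= 1 ->
    (P [set w | Pbar T (X w) (fun m => sig m w) <= alpha]%R <= (2 * alpha)%:E)%E.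
Proof.
move=> alpha /andP[alpha_ge0 _].
apply: (randomized_le mX q_ge0 q_sum1 msig sig_law indep
          (A := fun s => [set x | Pbar T x s <= alpha]%R)) => s.
- exact: measurable_Pbar_le.
- exact: prob_Pbar_le.
Qed.
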